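(* Let $m\ge2$ and let $W$ be as in the context. Suppose the nonzero eigenvalues of $W$ (counted with algebraic multiplicity) are $\pm i\lambda_1,\dots,\pm i\lambda_r$ with $\lambda_k>0$ (the eigenvalue $0$ then having multiplicity $d-2r$). Then $$\sqrt{\det\mathcal{O}_{m-1}}=m^{\frac d2-r}\prod_{k=1}^r\frac{(1+\lambda_k)^m-(1-\lambda_k)^m}{2\lambda_k}.$$
   Context: $\mathbb{B}_n$ carries the Riemannian metric $\mathring b$ induced by the Bergman Hermitian metric, the standard complex structure $J$, and $\omega_p(\xi,\nu)=\mathring b_p(\xi,J\nu)$. $\Gamma\subseteq\mathbb{B}_n$ is an embedded submanifold of dimension $d$ with inclusion $\iota$, $\gamma:B(0,1)\subset\mathbb{R}^d\to\Gamma$ a parametrization with $p=\gamma(t)$, $G=(g_{jk}(p))$ with $g_{jk}(p)=\mathring b_p(D_p\iota\,\partial_{t_j},D_p\iota\,\partial_{t_k})$ and $H=(h_{jk}(p))$ with $h_{jk}(p)=\omega_p(D_p\iota\,\partial_{t_j},D_p\iota\,\partial_{t_k})$, and $W=G^{-1}H$ (a $d\times d$ real matrix, skew-adjoint with respect to $G$, so its nonzero eigenvalues are purely imaginary in conjugate pairs). $\mathcal{O}_{m-1}$ is the $(m-1)d\times(m-1)d$ complex matrix which, as an $(m-1)\times(m-1)$ block matrix with $d\times d$ blocks, is block tridiagonal with diagonal blocks $2I$, superdiagonal blocks $-I-iW$, subdiagonal blocks $-I+iW$, and all other blocks zero. The square root is the positive one. *)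

From HB Require Import structures.
From mathcomp Require Import all_boot all_order all_algebra.
From mathcomp Require Import complex.
Set Implicit Arguments. Unset Strict Implicit. Unset Printing Implicit Defensive.
Import Order.TTheory GRing.Theory Num.Theory.
Local Open Scope ring_scope.

Definition cmx (R : rcfType) (p q : nat) (A : 'M[R]_(p, q)) : 'M[R[i]]_(p, q) :=
  map_mx (fun x : R => (x%:C)%C) A.

Definition Omx (R : rcfType) (d m : nat) (W : 'M[R]_d)
  : 'M[R[i]]_(\sum_(k < m.-1) d) :=
  \mxblock_(a < m.-1, b < m.-1)
    (if (b : nat) == a then 2%:M
     else if (b : nat) == a.+1 then - 1%:M - ('i)%C *: cmx W
     else if (a : nat) == b.+1 then - 1%:M + ('i)%C *: cmx W
     else (0 : 'M[R[i]]_d)).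

From HB Require Import structures.
From mathcomp Require Import all_boot all_order all_algebra.
From mathcomp Require Import complex perm ring.
Set Implicit Arguments. Unset Strict Implicit. Unset Printing Implicit Defensive.
Import Order.TTheory GRing.Theory Num.Theory.
Local Open Scope ring_scope.

(* Let P triangularize W over R[i].  Conjugating every block of O_(m-1) by P
   and regrouping the indices makes O_(m-1) block lower triangular, whose
   diagonal blocks are the scalar tridiagonal matrices tridiag(2, -1 - i t,
   -1 + i t) for the eigenvalues t of W.  Such a matrix of size m - 1 has
   determinant h_(m-1)(1 + i t, 1 - i t), which is m at t = 0 and
   ((1 + l)^m - (1 - l)^m) / (2 l) at t = +-i l.  So det O_(m-1) is m^(d-2r)
   times the square of a nonnegative real product. *)

Section Determinants.
Variable K : comNzRingType.

Lemma det_castmx m n (e1 e2 : m = n) (A : 'M[K]_m) :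
  \det (castmx (e1, e2) A) = \det A.
Proof. by rewrite (eq_irrelevance e2 e1); case: n / e1 e2 => e2; rewrite castmx_id. Qed.

Lemma det_mxsub_inj n n' (f : 'I_n' -> 'I_n) (A : 'M[K]_n) :
  n = n' -> injective f -> \det (mxsub f f A) = \det A.
Proof.
move=> nn' finj; subst n'; pose s := perm finj.
have -> : mxsub f f A = row_perm s (col_perm s A).
  by apply/matrixP => x y; rewrite !mxE !permE.
rewrite row_permE col_permE !det_mulmx !det_perm odd_permV.
by rewrite mulrCA -signr_addb addbb expr0 mulr1.
Qed.

Lemma det_mxblock_lower p (p_ : 'I_p -> nat) (B_ : forall i j, 'M[K]_(p_ i, p_ j)) :
  (forall i j : 'I_p, (i < j)%N -> B_ i j = 0) ->
  \det (\mxblock_(i, j) B_ i j) = \prod_i \det (B_ i i).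
Proof.
elim: p p_ B_ => [|p IHp] p_ B_ B_upper.
  have det_size0 k (A : 'M[K]_k) : k = 0%N -> \det A = 1 by move=> k0; subst k; exact: det_mx00.
  by rewrite [RHS]big_ord0 det_size0 // big_ord0.
rewrite mxblock_recul det_castmx.
have -> : \mxrow_j B_ ord0 (lift ord0 j) = 0.
  rewrite -(@mxrow0 _ _ (fun j => p_ (lift ord0 j))).
  by apply: eq_mxrow => j; rewrite B_upper.
by rewrite det_lblock IHp ?big_ord_recl // => i j ltij; apply: B_upper.
Qed.

(* Regrouping the entries of a matrix of n x n blocks of size d into d x d
   blocks of size n is a simultaneous permutation of rows and columns. *)
Lemma det_mxblock_interchange n d (F : 'I_n -> 'I_n -> 'M[K]_d) :
  \det (\mxblock_(a < n, b < n) F a b) =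
  \det (\mxblock_(i < d, j < d) (\matrix_(a < n, b < n) F a b i j)).
Proof.
have sizeE : (\sum_(a < n) d = \sum_(i < d) n)%N.
  by rewrite !big_const_ord !iter_addn_0 mulnC.
pose f (x : 'I_(\sum_(i < d) n)) : 'I_(\sum_(a < n) d) :=
  @tagnat.Rank n (fun _ => d) (@tagnat.sig2 d (fun _ => n) x) (tagnat.sig1 x).
have sig1f a i : @tagnat.sig1 n (fun _ => d) (@tagnat.Rank n (fun _ => d) a i) = a.
  exact: tagnat.Rank1K.
have sig2f a i : @tagnat.sig2 n (fun _ => d) (@tagnat.Rank n (fun _ => d) a i) = i.
  by apply: val_inj; rewrite tagnat.Rank2K.
have finj : injective f.
  move=> x y /(congr1 (fun z => (@tagnat.sig1 n (fun _ => d) z, @tagnat.sig2 n (fun _ => d) z))).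
  rewrite /f !sig1f !sig2f => -[e1 e2].
  rewrite -[x]tagnat.sig2K -[y]tagnat.sig2K; apply/val_inj/eqP.
  by rewrite tagnat.eq_Rank e2 e1 !eqxx.
rewrite -(det_mxsub_inj _ sizeE finj); congr (\det _).
by apply/matrixP => x y; rewrite !mxE /f !sig2f !sig1f.
Qed.

End Determinants.

Section Tridiagonal.
Variable K : comNzRingType.

Definition tridiag_coef (al be ga : K) (a b : nat) : K :=
  if b == a then al else if b == a.+1 then be else if a == b.+1 then ga else 0.

Definition tridiag k (al be ga : K) : 'M[K]_k :=
  \matrix_(a, b) tridiag_coef al be ga a b.

Lemma det_tridiagSS k al be ga :
  \det (tridiag k.+2 al be ga) =
  al * \det (tridiag k.+1 al be ga) - be * ga * \det (tridiag k al be ga).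
Proof.
rewrite (expand_det_row _ ord0) !big_ord_recl big1 ?addr0; last first.
  by move=> i _; rewrite !mxE /tridiag_coef /= /bump /= mul0r.
rewrite /cofactor.
have -> : row' ord0 (col' ord0 (tridiag k.+2 al be ga)) = tridiag k.+1 al be ga.
  by apply/matrixP => a b; rewrite !mxE.
rewrite !mxE /tridiag_coef /= expr0 mul1r.
set N := row' ord0 (col' (lift ord0 ord0) (tridiag k.+2 al be ga)).
rewrite (expand_det_col N ord0) big_ord_recl big1 ?addr0; last first.
  by move=> i _; rewrite !mxE /tridiag_coef /= /bump /= mul0r.
rewrite /cofactor.
have -> : row' ord0 (col' ord0 N) = tridiag k al be ga.
  by apply/matrixP => a b; rewrite !mxE /tridiag_coef /= /bump /= !add1n !eqSS.
rewrite !mxE /tridiag_coef /= /bump /= !addn0 add0n expr0 expr1 !mul1r mulN1r.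
by rewrite mulrN mulrA.
Qed.

(* The complete homogeneous symmetric polynomial h_k(u, v) = \sum_(j <= k) u^j v^(k-j). *)
Fixpoint homsum (u v : K) k : K :=
  if k is k'.+1 then v * homsum u v k' + u ^+ k'.+1 else 1.

Lemma det_tridiag u v be ga k :
  be * ga = u * v -> \det (tridiag k (u + v) be ga) = homsum u v k.
Proof.
move=> bega.
suff : \det (tridiag k (u + v) be ga) = homsum u v k /\
       \det (tridiag k.+1 (u + v) be ga) = homsum u v k.+1 by case.
elim: k => [|k [IHk IHkS]].
  by rewrite det_mx00 det_mx11 !mxE /tridiag_coef /= mulr1 expr1 addrC.
by split=> //; rewrite det_tridiagSS IHk IHkS bega /= !exprS; ring.
Qed.

Lemma homsum_closed u v k : (v - u) * homsum u v k = v ^+ k.+1 - u ^+ k.+1.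
Proof.
elim: k => [|k IHk] /=; first by rewrite mulr1 !expr1.
by rewrite mulrDr mulrCA IHk !exprS; ring.
Qed.

Lemma homsum11 k : homsum 1 1 k = k.+1%:R.
Proof. by elim: k => [|k IHk] //=; rewrite IHk expr1n mul1r [in RHS]mulrS addrC. Qed.

End Tridiagonal.

Lemma rmorph_homsum (K K' : comNzRingType) (f : {rmorphism K -> K'}) u v k :
  f (homsum u v k) = homsum (f u) (f v) k.
Proof. by elim: k => [|k IHk] /=; rewrite ?rmorph1 // rmorphD rmorphM IHk rmorphXn. Qed.

Section Similarity.
Variable K : comUnitRingType.

Lemma char_poly_similar n (P A : 'M[K]_n) :
  P \in unitmx -> char_poly (P *m A *m invmx P) = char_poly A.
Proof.
move=> Pu; pose Pp := map_mx (@polyC K) P; pose Pi := map_mx (@polyC K) (invmx P).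
have PPi : Pp *m Pi = 1%:M by rewrite -map_mxM mulmxV // map_mx1.
rewrite /char_poly.
have -> : char_poly_mx (P *m A *m invmx P) = Pp *m char_poly_mx A *m Pi.
  rewrite /char_poly_mx mulmxBr mulmxBl mul_mx_scalar -scalemxAl PPi scalemx1.
  by rewrite !map_mxM.
by rewrite !det_mulmx mulrAC -det_mulmx PPi det1 mul1r.
Qed.

Lemma mxdiag_mulmxV p d (P : 'M[K]_d) :
  P \in unitmx -> \mxdiag_(a < p) P *m \mxdiag_(a < p) invmx P = 1%:M.
Proof.
move=> Pu; rewrite {1}/mxdiag mul_mxblock_mxdiag -(mxdiagZ (p_ := fun=> d)) /mxdiag.
by apply: eq_mxblock => a b; case: (a == b); rewrite ?conform_mx_id ?mulmxV ?mul0mx.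
Qed.

Lemma det_mxblock_affine n d (x y : 'I_n -> 'I_n -> K) (A P : 'M[K]_d) :
  P \in unitmx -> is_trig_mx (P *m A *m invmx P) ->
  \det (\mxblock_(a < n, b < n) ((x a b)%:M + y a b *: A)) =
  \prod_(i < d) \det (\matrix_(a < n, b < n) (x a b + y a b * (P *m A *m invmx P) i i)).
Proof.
move=> Pu; set T := P *m A *m invmx P => /is_trig_mxP T_lower.
have conjE a b : P *m ((x a b)%:M + y a b *: A) *m invmx P = (x a b)%:M + y a b *: T.
  rewrite mulmxDr mulmxDl mul_mx_scalar -scalemxAl mulmxV // scalemx1.
  by rewrite -scalemxAr -scalemxAl.
have -> : \det (\mxblock_(a, b) ((x a b)%:M + y a b *: A)) = \det
    (\mxdiag_(a < n) P *m \mxblock_(a, b) ((x a b)%:M + y a b *: A) *m \mxdiag_(a < n) invmx P).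
  by rewrite !det_mulmx mulrAC -det_mulmx mxdiag_mulmxV // det1 mul1r.
rewrite mul_mxdiag_mxblock mul_mxblock_mxdiag.
under eq_mxblock do rewrite conjE.
clearbody T.
rewrite det_mxblock_interchange det_mxblock_lower.
  by apply: eq_bigr => i _; congr (\det _); apply/matrixP => a b; rewrite !mxE eqxx mulr1n.
move=> i j ltij; apply/matrixP => a b.
have /negPf ij : i != j by rewrite neq_ltn ltij.
by rewrite !mxE T_lower // ij mulr0 addr0 mulr0n.
Qed.

End Similarity.

Lemma big_diag_similar_trig (F : fieldType) (S : comNzRingType) d (A P : 'M[F]_d)
    (s : seq F) (f : F -> S) :
  P \in unitmx -> is_trig_mx (P *m A *m invmx P) ->
  char_poly A = \prod_(z <- s) ('X - z%:P) ->
  \prod_(i < d) f ((P *m A *m invmx P) i i) = \prod_(z <- s) f z.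
Proof.
move=> Pu Ttrig charA; rewrite -(big_map (fun i => (P *m A *m invmx P) i i) xpredT f).
apply: perm_big; apply: prod_XsubC_eq.
by rewrite big_map -char_poly_trig // char_poly_similar.
Qed.

Lemma exists_similar_trig (C : numClosedFieldType) d (A : 'M[C]_d) :
  exists2 P : 'M[C]_d, P \in unitmx & is_trig_mx (P *m A *m invmx P).
Proof.
have [d0|d_gt0] := posnP d.
  by exists 1%:M; rewrite ?unitmx1 //; apply/is_trig_mxP => i; have := ltn_ord i; rewrite {2}d0.
have [Q Qu Qtrig] := Schur A d_gt0.
by exists Q; rewrite ?unitarymx_unit // -conjumx // unitarymx_unit.
Qed.

Section EigenvalueFactors.
Variable R : rcfType.
Local Open Scope complex_scope.

Definition eigen_factor (m : nat) (l : R) : R :=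
  ((1 + l) ^+ m - (1 - l) ^+ m) / (2 * l).

Lemma eigen_factorN m l : eigen_factor m (- l) = eigen_factor m l.
Proof. by rewrite /eigen_factor !opprK mulrN invrN mulrN -mulNr opprB. Qed.

Lemma eigen_factor_ge0 m l : 0 < l -> 0 <= eigen_factor m l.
Proof.
move=> l_gt0; apply: divr_ge0; last by rewrite mulr_ge0 ?ler0n ?ltW.
rewrite subr_ge0.
apply: le_trans (ler_norm _) _; rewrite normrX lerXn2r ?nnegrE ?normr_ge0 //.
  by rewrite addr_ge0 ?ltW.
by apply: le_trans (ler_normB _ _) _; rewrite normr1 gtr0_norm.
Qed.

Lemma homsum_eigen_factor l k :
  l != 0 -> homsum (1 - l) (1 + l) k = eigen_factor k.+1 l.
Proof.
move=> l_neq0; have := homsum_closed (1 - l) (1 + l) k.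
by rewrite /eigen_factor => <-; field.
Qed.

(* The determinant of O_(m-1) in the scalar case d = 1, W = t. *)
Definition Omx_factor (m : nat) (t : R[i]) : R[i] :=
  homsum (1 + 'i * t) (1 - 'i * t) m.-1.

Lemma Omx_factor0 m : (0 < m)%N -> Omx_factor m 0 = m%:R.
Proof. by move=> m_gt0; rewrite /Omx_factor mulr0 subr0 addr0 homsum11 prednK. Qed.

Lemma Omx_factor_imaginary m l :
  (0 < m)%N -> l != 0 -> Omx_factor m (l *i) = (eigen_factor m l)%:C.
Proof.
move=> m_gt0 l_neq0; rewrite /Omx_factor.
have -> : 'i * (l *i) = (- l)%:C by simpc.
by rewrite -rmorphD -rmorphB -rmorph_homsum opprK homsum_eigen_factor ?prednK.
Qed.

Definition spectrum n r (l : 'I_r -> R) : seq R[i] :=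
  nseq n 0 ++ [seq (l k) *i | k <- index_enum 'I_r] ++ [seq (- (l k)) *i | k <- index_enum 'I_r].

Lemma prod_spectrum (S : comNzRingType) n r (l : 'I_r -> R) (f : R[i] -> S) :
  \prod_(z <- spectrum n l) f z = f 0 ^+ n * \prod_(k < r) (f ((l k) *i) * f ((- (l k)) *i)).
Proof. by rewrite !big_cat big_nseq iter_mulr_1 !big_map big_split. Qed.

Lemma prod_spectrum_XsubC n r (l : 'I_r -> R) :
  \prod_(z <- spectrum n l) ('X - z%:P) =
  'X^n * \prod_(k < r) (('X - ((l k) *i)%:P) * ('X + ((l k) *i)%:P)).
Proof.
rewrite prod_spectrum subr0; congr (_ * _); apply: eq_bigr => k _.
have -> : (- (l k)) *i = - ((l k) *i) by apply/eqP; rewrite eq_complex /= oppr0 !eqxx.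
by rewrite polyCN opprK.
Qed.

Lemma sqrtC_sqr_prod n r (c : R) (e : 'I_r -> R) :
  0 <= c -> (forall k, 0 <= e k) ->
  sqrtC (c%:C ^+ n * \prod_(k < r) ((e k)%:C * (e k)%:C)) =
  (Num.sqrt c ^+ n * \prod_(k < r) e k)%:C.
Proof.
move=> c_ge0 e_ge0; set y := Num.sqrt c ^+ n * _.
have y_ge0 : 0 <= y by rewrite mulr_ge0 ?exprn_ge0 ?sqrtr_ge0 ?prodr_ge0.
have yE : c ^+ n * \prod_(k < r) (e k * e k) = y ^+ 2.
  by rewrite exprMn -exprM mulnC exprM sqr_sqrtr // expr2 -big_split.
rewrite -(@sqrCK _ y%:C) ?ler0c // -[in RHS]rmorphXn -yE rmorphM rmorphXn rmorph_prod.
by under [in RHS]eq_bigr do rewrite rmorphM.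
Qed.

End EigenvalueFactors.

Section Omx.
Variables (R : rcfType) (d m : nat) (W : 'M[R]_d).
Local Open Scope complex_scope.

Lemma Omx_affine :
  Omx m W = \mxblock_(a, b)
    ((tridiag_coef 2 (-1) (-1) a b)%:M + tridiag_coef 0 (- 'i) 'i a b *: cmx W).
Proof.
apply: eq_mxblock => a b; rewrite /tridiag_coef.
case: ifP => _; first by rewrite scale0r addr0.
case: ifP => _; first by rewrite raddfN scaleNr.
by case: ifP => _; rewrite ?raddfN ?scale0r ?addr0 ?raddf0.
Qed.

Lemma det_Omx (P : 'M[R[i]]_d) :
  P \in unitmx -> is_trig_mx (P *m cmx W *m invmx P) ->
  \det (Omx m W) = \prod_(j < d) Omx_factor m ((P *m cmx W *m invmx P) j j).
Proof.
move=> Pu Ptrig; rewrite Omx_affine (det_mxblock_affine _ _ Pu Ptrig).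
apply: eq_bigr => j _; set t := _ j j.
rewrite /Omx_factor -(@det_tridiag _ _ _ (- 1 - 'i * t) (- 1 + 'i * t)); last by ring.
congr (\det _); apply/matrixP => a b; rewrite !mxE /tridiag_coef.
by do ![case: ifP => _]; ring.
Qed.

End Omx.

Theorem mainTheorem16 (R : rcfType) (d m r : nat) (G H W : 'M[R]_d)
    (lambda : 'I_r -> R) :
  (2 <= m)%N ->
  G^T = G ->
  (forall v : 'rV[R]_d, v != 0 -> 0 < (v *m G *m v^T) 0 0) ->
  H^T = - H ->
  W = invmx G *m H ->
  (forall k, 0 < lambda k) ->
  char_poly (cmx W) =
    'X^(d - 2 * r) *
    \prod_(k < r) (('X - ((lambda k) *i)%C%:P) * ('X + ((lambda k) *i)%C%:P)) ->
  sqrtC (\det (Omx m W)) =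
    ((Num.sqrt (m%:R : R)) ^+ (d - 2 * r) *
     \prod_(k < r) (((1 + lambda k) ^+ m - (1 - lambda k) ^+ m) / (2 * lambda k)))%:C%C.
Proof.
move=> m_ge2 _ _ _ _ lambda_gt0 charW.
have m_gt0 : (0 < m)%N by apply: ltnW.
have lambda_neq0 k : lambda k != 0 by rewrite gt_eqF.
have [P Pu Ptrig] := exists_similar_trig (cmx W).
rewrite (det_Omx m Pu Ptrig).
rewrite (big_diag_similar_trig _ Pu Ptrig (etrans charW (esym (prod_spectrum_XsubC _ _)))).
rewrite prod_spectrum Omx_factor0 // -(rmorph_nat (real_complex R)).
under eq_bigr do rewrite !Omx_factor_imaginary ?oppr_eq0 // eigen_factorN.
by rewrite sqrtC_sqr_prod // => k; apply: eigen_factor_ge0.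
Qed.
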